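(* Fix a parameter space $W$, a data space $X$, an update rule $g: W\times X\to W$, a metric $d$ on $W$ and initial parameters $\mathbf{w}_0\in W$. Two datasets $D, D'\subseteq X$ are forgeable with $\epsilon=0$ if and only if $H_D(W)=H_{D'}(W)$, where $H_D(W)$ denotes the set of parameter sequences $\{\mathbf{w}_i\}_{i\in J}$ of all logs in $H_{D,g,d,0}$.
   Context: A valid $(g,d,\epsilon)$ log is a sequence $\{(\mathbf{w}_i,\mathbf{x}_i)\}_{i\in J}$ ($J$ a countable index set, consecutive indices) such that $d(\mathbf{w}_{i+1}, g(\mathbf{w}_i,\mathbf{x}_i))\le \epsilon$ for all $i\in J$. For a dataset $D$, $H_{D,g,d,\epsilon}$ is the set of all valid $(g,d,\epsilon)$ logs starting from $\mathbf{w}_0$ whose data points all lie in $D$. A forging map from $D$ to $D'$ (with $\epsilon$) is a map $B: H_{D,g,d,0}\to H_{D',g,d,\epsilon}$ with $B(\{(\mathbf{w}_i,\mathbf{x}_i)\}_{i\in J})=\{(\mathbf{w}_i,\tilde{\mathbf{x}}_i)\}_{i\in J}$, $\tilde{\mathbf{x}}_i\in D'$, the output being a valid $(g,d,\epsilon)$ log. $D$ and $D'$ are forgeable with $\epsilon$ if there is a forging map from $D$ to $D'$ and one from $D'$ to $D$, both with $\epsilon$. *)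

From Stdlib Require Import Reals List.
Open Scope R_scope.
Set Implicit Arguments.

(* A sequence indexed by a countable set of consecutive indices starting at 0:
   either finite (J = {0,...,n-1}) or infinite (J = N). *)
Inductive iseq (A : Type) : Type :=
  | IFin : list A -> iseq A
  | IInf : (nat -> A) -> iseq A.

Definition iget (A : Type) (s : iseq A) (i : nat) : option A :=
  match s with
  | IFin l => nth_error l i
  | IInf f => Some (f i)
  end.

Definition imap (A B : Type) (h : A -> B) (s : iseq A) : iseq B :=
  match s with
  | IFin l => IFin (map h l)
  | IInf f => IInf (fun i => h (f i))
  end.

Definition is_metric (W : Type) (d : W -> W -> R) : Prop :=
  (forall x y, 0 <= d x y) /\
  (forall x y, d x y = 0 <-> x = y) /\
  (forall x y, d x y = d y x) /\
  (forall x y z, d x z <= d x y + d y z).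

Section Logs.
Variables (W X : Type) (g : W -> X -> W) (d : W -> W -> R) (w0 : W).

Definition log := iseq (W * X).

Definition valid_log (eps : R) (L : log) : Prop :=
  forall i a b, iget L i = Some a -> iget L (S i) = Some b ->
    d (fst b) (g (fst a) (snd a)) <= eps.

Definition H (D : X -> Prop) (eps : R) (L : log) : Prop :=
  (exists x, iget L 0 = Some (w0, x)) /\
  (forall i p, iget L i = Some p -> D (snd p)) /\
  valid_log eps L.

Definition params (L : log) : iseq W := imap fst L.

Definition forging_map (D D' : X -> Prop) (eps : R)
  (B : {L | H D 0 L} -> {L | H D' eps L}) : Prop :=
  forall L, params (proj1_sig (B L)) = params (proj1_sig L).

Definition forgeable (D D' : X -> Prop) (eps : R) : Prop :=
  (exists B, @forging_map D D' eps B) /\ (exists B, @forging_map D' D eps B).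

Definition HW (D : X -> Prop) (s : iseq W) : Prop :=
  exists L, H D 0 L /\ params L = s.

End Logs.

(* A forging map may only change the data points of a log, so it exists from D to D'
   exactly when every parameter sequence of a log over D is also that of a log over D';
   the map itself is obtained by choosing such a log for each input. *)
From Stdlib Require Import Reals ClassicalEpsilon.
Open Scope R_scope.

Section Forging.
Variables (W X : Type) (g : W -> X -> W) (d : W -> W -> R) (w0 : W).

Lemma forging_map_HW_incl (D D' : X -> Prop) B :
  @forging_map W X g d w0 D D' 0 B -> forall s, HW g d w0 D s -> HW g d w0 D' s.
Proof.
  intros HB s [L [HL Hs]].
  exists (proj1_sig (B (exist _ L HL))). split.
  - exact (proj2_sig (B (exist _ L HL))).
  - rewrite HB. exact Hs.
Qed.

Lemma HW_incl_forging_map (D D' : X -> Prop) :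
  (forall s, HW g d w0 D s -> HW g d w0 D' s) ->
  exists B, @forging_map W X g d w0 D D' 0 B.
Proof.
  intros Hincl.
  assert (forge : forall L : {L | H g d w0 D 0 L},
            {L' | H g d w0 D' 0 L' /\ params L' = params (proj1_sig L)}).
  { intros [L HL]. apply constructive_indefinite_description.
    apply Hincl. exists L. split; auto. }
  exists (fun L => exist _ (proj1_sig (forge L)) (proj1 (proj2_sig (forge L)))).
  intros L. exact (proj2 (proj2_sig (forge L))).
Qed.

Lemma forging_map_exists_iff (D D' : X -> Prop) :
  (exists B, @forging_map W X g d w0 D D' 0 B) <->
  (forall s, HW g d w0 D s -> HW g d w0 D' s).
Proof.
  split.
  - intros [B HB]. exact (forging_map_HW_incl D D' B HB).
  - exact (HW_incl_forging_map D D').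
Qed.

End Forging.

Theorem theorem1 (W X : Type) (g : W -> X -> W) (d : W -> W -> R) (w0 : W)
  (hd : is_metric d) (D D' : X -> Prop) :
  forgeable g d w0 D D' 0 <->
  (forall s : iseq W, HW g d w0 D s <-> HW g d w0 D' s).
Proof.
  unfold forgeable.
  rewrite !forging_map_exists_iff.
  split.
  - intros [Hincl Hincl'] s. split; [apply Hincl | apply Hincl'].
  - intros Heq. split; intros s; apply Heq.
Qed.
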